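(* Let $q\ge 7$ be a prime power and $\mathcal{K}$ a set of $q(q-3)$ points in $\mathrm{PG}(2,q)$. Then there exists a line $L$ with $|L\cap\mathcal{K}|\notin\{0,q-3,q-2\}$.
   Context: $\mathrm{PG}(2,q)$ is the projective plane of $\mathbb{F}_q^3$; points are $1$-dimensional and lines $2$-dimensional subspaces. *)

(* PG(2,q) over a finite field F with #|F| = q.
   A subspace of F^3 is represented canonically by the square matrix <<A>>%MS
   (its row space); genmx gives a unique representative of each subspace. *)
From HB Require Import structures.
From mathcomp Require Import all_boot all_order all_algebra all_field.
Set Implicit Arguments. Unset Strict Implicit. Unset Printing Implicit Defensive.
Import GRing.Theory.
Local Open Scope ring_scope.

Definition is_subspace (F : fieldType) (k : nat) (A : 'M[F]_3) : bool :=
  (\rank A == k)%N && (<<A>>%MS == A).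

Definition pg_point (F : fieldType) (A : 'M[F]_3) : bool := is_subspace 1 A.
Definition pg_line (F : fieldType) (A : 'M[F]_3) : bool := is_subspace 2 A.

Definition incident (F : fieldType) (P L : 'M[F]_3) : bool := (P <= L)%MS.

From HB Require Import structures.
From mathcomp Require Import all_boot all_order all_algebra all_field.
From mathcomp Require Import zify.
Set Implicit Arguments. Unset Strict Implicit. Unset Printing Implicit Defensive.
Import GRing.Theory.
Local Open Scope ring_scope.

(* Suppose it did, and call the (q-2)-secants "long".
   1. Through a point X of K the q+1 lines partition the other q(q-3)-1
      points of K into parts of size q-4 or q-3; hence X lies on exactly
      3 long secants.  Double counting gives 3q(q-3) = #long * (q-2), so
      q-2 divides 6, i.e. q = 8, with 20 long secants.
   2. For q = 8, a point Q off K lies on 9 lines carrying 40 points of K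
      in parts of size 0, 5 or 6; so Q is on 0 long secants and 1 external
      line, or on 5 long secants and 2 external lines.  Counting incidences
      with the long secants, exactly 12 points are of the second kind.
   3. Counting triples (Q, L, M) with Q off K on the external lines L and M,
      the number z of external lines satisfies 9z + z(z-1) = 9z + 2*12,
      i.e. z(z-1) = 24, which has no solution. *)

Lemma canonical_sub_eq (F : fieldType) (A B : 'M[F]_3) :
  <<A>>%MS = A -> <<B>>%MS = B -> (A <= B)%MS -> (\rank B <= \rank A)%N -> A = B.
Proof.
move=> gA gB sAB rBA.
have [_ eqAB] := mxrank_leqif_eq sAB.
have: (A == B)%MS by rewrite -eqAB eqn_leq rBA mxrankS.
by move/genmxP; rewrite gA gB.
Qed.

Lemma point_of_vec (F : fieldType) (w : 'rV[F]_3) : w != 0 -> pg_point <<w>>%MS.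
Proof. by move=> nz; rewrite /pg_point /is_subspace genmx_id eqxx genmxE rank_rV nz. Qed.

Lemma point_of_vec_in (F : fieldType) (P : 'M[F]_3) (w : 'rV[F]_3) :
  pg_point P -> w != 0 -> (w <= P)%MS -> <<w>>%MS = P.
Proof.
move=> /andP [/eqP rP /eqP gP] nz wP; apply: canonical_sub_eq => //.
- exact: genmx_id.
- by rewrite genmxE.
- by rewrite genmxE rank_rV nz rP.
Qed.

Lemma point_neq_nsub (F : fieldType) (P Q : 'M[F]_3) :
  pg_point P -> pg_point Q -> P != Q -> ~~ (Q <= P)%MS.
Proof.
move=> /andP [/eqP rP /eqP gP] /andP [/eqP rQ /eqP gQ] nPQ; apply/negP => QP.
by move: nPQ; rewrite (canonical_sub_eq gQ gP QP) ?rP ?rQ ?eqxx.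
Qed.

Lemma join_line (F : fieldType) m (P : 'M[F]_3) (w : 'M[F]_(m, 3)) :
  pg_point P -> (\rank w <= 1)%N -> ~~ (w <= P)%MS ->
  [/\ pg_line <<(P + w)%MS>>%MS, (P <= <<(P + w)%MS>>)%MS & (w <= <<(P + w)%MS>>)%MS].
Proof.
move=> /andP [/eqP rP /eqP gP] rw nwP.
rewrite !genmxE addsmxSl addsmxSr; split=> //.
rewrite /pg_line /is_subspace genmx_id eqxx andbT genmxE.
have [le_sum _] := mxrank_adds_leqif P w.
have [le_P eq_P] := mxrank_leqif_sup (addsmxSl P w).
have : \rank P != \rank (P + w)%MS by rewrite eq_P addsmx_sub submx_refl.
by rewrite rP in le_sum le_P *; rewrite eqn_leq; move: le_sum le_P; lia.
Qed.

Lemma join_line_eq (F : fieldType) m (P L : 'M[F]_3) (w : 'M[F]_(m, 3)) :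
  pg_point P -> pg_line L -> (\rank w <= 1)%N -> ~~ (w <= P)%MS ->
  (P <= L)%MS -> (w <= L)%MS -> <<(P + w)%MS>>%MS = L.
Proof.
move=> pP lL rw nwP PL wL.
have [lPw _ _] := join_line pP rw nwP.
move: lPw lL => /andP [/eqP rPw _] /andP [/eqP rL /eqP gL].
apply: canonical_sub_eq => //; first exact: genmx_id.
  by rewrite genmxE addsmx_sub PL.
by rewrite rPw rL.
Qed.

Lemma lines_through_two (F : finFieldType) (X P : 'M[F]_3) :
  pg_point X -> pg_point P -> X != P ->
  [set L | pg_line L & (X <= L)%MS && (P <= L)%MS] = [set <<(X + P)%MS>>%MS].
Proof.
move=> pX pP nXP.
have rP : (\rank P <= 1)%N by case/andP: pP => /eqP ->.
have nPX := point_neq_nsub pX pP nXP.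
have [lXP sX sP] := join_line pX rP nPX.
apply/setP=> L; rewrite !inE; apply/idP/eqP.
  by case/andP=> lL /andP [XL PL]; rewrite (join_line_eq pX lL rP nPX XL PL).
by move=> ->; rewrite lXP sX sP.
Qed.

Lemma lines_meet (F : fieldType) (L M : 'M[F]_3) :
  pg_line L -> pg_line M -> exists P, [/\ pg_point P, (P <= L)%MS & (P <= M)%MS].
Proof.
move=> /andP [/eqP rL _] /andP [/eqP rM _].
have := mxrank_sum_cap L M; rewrite rL rM.
have := rank_leq_col (L + M)%MS => le_sum dim_eq.
have nz : (L :&: M)%MS != 0.
  by rewrite -mxrank_eq0; apply/eqP => r0; move: dim_eq; rewrite r0; lia.
have wLM := nz_row_sub (L :&: M)%MS.
exists <<nz_row (L :&: M)%MS>>%MS; split; first by rewrite point_of_vec ?nz_row_eq0.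
  by rewrite genmxE (submx_trans wLM) // capmxSl.
by rewrite genmxE (submx_trans wLM) // capmxSr.
Qed.

Lemma lines_meet_unique (F : finFieldType) (L M : 'M[F]_3) :
  pg_line L -> pg_line M -> L != M ->
  exists Q, [set P | pg_point P & (P <= L)%MS && (P <= M)%MS] = [set Q].
Proof.
move=> lL lM nLM.
have [Q [pQ QL QM]] := lines_meet lL lM.
exists Q; apply/setP => P; rewrite !inE; apply/idP/eqP; last first.
  by move=> ->; rewrite pQ QL QM.
case/and3P=> pP PL PM; apply/eqP; apply/negP => /negP nPQ.
have rQ : (\rank Q <= 1)%N by case/andP: pQ => /eqP ->.
have nQP := point_neq_nsub pP pQ nPQ.
move: nLM; rewrite -(join_line_eq pP lL rQ nQP PL QL).
by rewrite (join_line_eq pP lM rQ nQP PM QM) eqxx.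
Qed.

Lemma card_subspace (F : finFieldType) m n (A : 'M[F]_(m, n)) :
  #|[set w : 'rV[F]_n | (w <= A)%MS]| = (#|F| ^ \rank A)%N.
Proof.
have ->: [set w : 'rV[F]_n | (w <= A)%MS] =
   [set x *m row_base A | x in [set: 'rV[F]_(\rank A)]].
  apply/setP=> w; rewrite inE; apply/idP/imsetP.
    move=> /submxP [D ->].
    have: (D *m A <= row_base A)%MS by rewrite eq_row_base submxMl.
    by case/submxP=> E ->; exists E; rewrite ?inE.
  by case=> x _ ->; rewrite -(eq_row_base A) submxMl.
rewrite card_imset; last exact: row_free_inj (row_base_free A).
by rewrite cardsT card_mx mul1n.
Qed.

Lemma card_subspace_nz (F : finFieldType) m n (A : 'M[F]_(m, n)) :
  #|[set w : 'rV[F]_n | (w <= A)%MS] :\ 0| = (#|F| ^ \rank A - 1)%N.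
Proof.
have := cardsD1 0 [set w : 'rV[F]_n | (w <= A)%MS].
by rewrite card_subspace inE sub0mx => ->; rewrite addKn.
Qed.

Lemma card_by_fibres (T U : finType) (S : {set T}) (V : {set U}) (f : T -> U) k :
  (forall x, x \in S -> f x \in V) ->
  (forall y, y \in V -> #|[set x in S | f x == y]| = k) -> #|S| = (#|V| * k)%N.
Proof.
move=> fSV Hk.
rewrite -sum1_card (partition_big f (mem V)) //= -sum_nat_const.
apply: eq_bigr => y Vy; rewrite -(Hk y Vy) -sum1_card.
by apply: eq_bigl => x; rewrite inE.
Qed.

Definition line_points (F : finFieldType) (L : 'M[F]_3) : {set 'M[F]_3} :=
  [set P | pg_point P & (P <= L)%MS].
Definition pencil (F : finFieldType) (X : 'M[F]_3) : {set 'M[F]_3} :=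
  [set L | pg_line L & (X <= L)%MS].

(* A line has q+1 points: its q^2-1 nonzero vectors fall into classes of q-1. *)
Lemma card_line_points (F : finFieldType) (L : 'M[F]_3) : pg_line L ->
  #|line_points L| = (#|F|).+1.
Proof.
move=> lL; have rL : \rank L = 2%N by case/andP: lL => /eqP.
have q_gt1 := card_finNzRing_gt1 F.
set S := [set w : 'rV[F]_3 | (w <= L)%MS] :\ 0.
have span_in : forall w, w \in S -> <<w>>%MS \in line_points L.
  move=> w; rewrite !inE => /andP [nz wL]; rewrite point_of_vec //= genmxE //.
have fibre : forall P, P \in line_points L ->
    #|[set w in S | <<w>>%MS == P]| = (#|F| - 1)%N.
  move=> P; rewrite inE => /andP [pP PL].
  have rP : \rank P = 1%N by case/andP: pP => /eqP.
  rewrite (_ : (#|F| - 1 = #|F| ^ \rank P - 1)%N); last by rewrite rP expn1.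
  rewrite -card_subspace_nz; apply: eq_card => w.
  rewrite !inE; apply/idP/idP.
    by case/andP=> /andP [nz wL] /eqP <-; rewrite nz genmxE submx_refl.
  case/andP=> nz wP; rewrite nz (submx_trans wP PL) /=.
  by rewrite (point_of_vec_in pP nz wP).
have := card_by_fibres span_in fibre; rewrite card_subspace_nz rL.
by move: #|line_points L| #|F| q_gt1 => c q q_gt1; rewrite expnS expn1; nia.
Qed.

(* A point is on q+1 lines: the q^3-q vectors off P fall into classes of
   q^2-q according to their join with P. *)
Lemma card_pencil (F : finFieldType) (P : 'M[F]_3) : pg_point P ->
  #|pencil P| = (#|F|).+1.
Proof.
move=> pP; have rP : \rank P = 1%N by case/andP: pP => /eqP.
have q_gt1 := card_finNzRing_gt1 F.
set S := ~: [set w : 'rV[F]_3 | (w <= P)%MS].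
have join_in : forall w, w \in S -> <<(P + w)%MS>>%MS \in pencil P.
  move=> w; rewrite !inE => nwP.
  by have [-> -> _] := join_line pP (rank_leq_row w) nwP.
have fibre : forall L, L \in pencil P ->
    #|[set x in S | <<(P + x)%MS>>%MS == L]| = (#|F| ^ 2 - #|F|)%N.
  move=> L; rewrite inE => /andP [lL PL].
  have rL : \rank L = 2%N by case/andP: lL => /eqP.
  have -> : [set x in S | <<(P + x)%MS>>%MS == L] =
      [set w : 'rV[F]_3 | (w <= L)%MS] :\: [set w : 'rV[F]_3 | (w <= P)%MS].
    apply/setP => w; rewrite !inE; apply/idP/idP.
      case/andP=> nwP /eqP <-; rewrite nwP /=.
      by have [_ _ ->] := join_line pP (rank_leq_row w) nwP.
    case/andP=> nwP wL; rewrite nwP /=.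
    by rewrite (join_line_eq pP lL (rank_leq_row w) nwP PL wL).
  rewrite cardsD (setIidPr _); last first.
    by apply/subsetP => w; rewrite !inE => wP; apply: submx_trans wP PL.
  by rewrite !card_subspace rL rP expn1.
have := card_by_fibres join_in fibre.
have := cardsC [set w : 'rV[F]_3 | (w <= P)%MS].
rewrite card_subspace rP card_mx expn1 mul1n -/S.
move: #|S| #|pencil P| #|F| q_gt1 => s c q q_gt1 cover.
rewrite !expnS expn0 !muln1 => count.
have pos : (0 < q * q - q)%N by nia.
apply/eqP; rewrite -(eqn_pmul2r pos) -count; apply/eqP; nia.
Qed.

Lemma sum_indicator (T : finType) (A : {set T}) (b : pred T) :
  (\sum_(x in A) (b x : nat) = #|[set x in A | b x]|)%N.
Proof.
transitivity (\sum_(x in A | b x) 1)%N.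
  by rewrite big_mkcondr /=; apply: eq_bigr => x _; case: (b x).
by rewrite -sum1_card; apply: eq_bigl => x; rewrite inE.
Qed.

Lemma double_count (T U : finType) (A : {set T}) (B : {set U}) (R : T -> U -> bool) :
  (\sum_(x in A) #|[set y in B | R x y]| = \sum_(y in B) #|[set x in A | R x y]|)%N.
Proof.
under eq_bigr do rewrite -sum_indicator.
by rewrite exchange_big /=; apply: eq_bigr => y _; rewrite sum_indicator.
Qed.

Lemma card_setD1_notin (T : finType) (A : {set T}) x : x \notin A -> #|A :\ x| = #|A|.
Proof. by move=> nA; rewrite (cardsD1 x A) (negbTE nA). Qed.

Definition on_line (F : finFieldType) (K : {set 'M[F]_3}) (L : 'M[F]_3) :
  {set 'M[F]_3} := [set P in K | (P <= L)%MS].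

Lemma pencil_partition (F : finFieldType) (K : {set 'M[F]_3}) (X : 'M[F]_3) :
  pg_point X -> (forall P, P \in K -> pg_point P) ->
  (\sum_(L in pencil X) #|on_line K L :\ X| = #|K :\ X|)%N.
Proof.
move=> pX pK.
have one_line : forall P, P \in K :\ X ->
    #|[set L in pencil X | (P <= L)%MS]| = 1%N.
  move=> P; rewrite !inE => /andP [nPX PK].
  rewrite (_ : [set L in pencil X | _] =
      [set L | pg_line L & (X <= L)%MS && (P <= L)%MS]).
    by rewrite (lines_through_two pX (pK P PK)) ?cards1 // eq_sym.
  by apply/setP => L; rewrite !inE andbA.
rewrite -sum1_card -(eq_bigr _ one_line) double_count.
by apply: eq_bigr => L _; apply: eq_card => P; rewrite !inE andbA.
Qed.

Lemma long_secant_arith (q t : nat) : (7 <= q)%N ->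
  (3 * (q * (q - 3)) = t * (q - 2))%N -> q = 8%N /\ t = 20%N.
Proof.
move=> q_ge7 count.
have dvd6 : (q - 2 %| 6)%N.
  have e : (3 * (q * (q - 3)) + 6 = (q - 2) * (3 * q - 3))%N by nia.
  have : (q - 2 %| 3 * (q * (q - 3)) + 6)%N by rewrite e dvdn_mulr.
  by rewrite (dvdn_addr _ (_ : q - 2 %| 3 * (q * (q - 3)))%N) // count dvdn_mull.
have := dvdn_leq (isT : (0 < 6)%N) dvd6 => le.
have [q7|q8] : q = 7%N \/ q = 8%N by lia.
  by move: count; rewrite q7; lia.
by move: count; rewrite q8; lia.
Qed.

Section ThreeSecantValues.

Variables (F : finFieldType) (K : {set 'M[F]_3}).
Local Notation q := #|F|.
Local Notation sec L := #|on_line K L|.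

Hypothesis q_ge7 : (7 <= q)%N.
Hypothesis K_points : forall P, P \in K -> pg_point P.
Hypothesis card_K : #|K| = (q * (q - 3))%N.
Hypothesis sec_values : forall L, pg_line L ->
  [\/ sec L = 0%N, sec L = (q - 3)%N | sec L = (q - 2)%N].

Let long := [set L | pg_line L & sec L == (q - 2)%N].
Let external := [set L | pg_line L & sec L == 0%N].
Let off := [set Q | pg_point Q & Q \notin K].
Local Notation long_through Q := #|[set L in long | (Q <= L)%MS]|.
Local Notation ext_through Q := #|[set L in external | (Q <= L)%MS]|.

Let pencil_sec (Q : 'M[F]_3) (k : nat) : {set 'M[F]_3} :=
  [set L in pencil Q | sec L == k].

Lemma pencil_sec_long Q : pencil_sec Q (q - 2) = [set L in long | (Q <= L)%MS].
Proof. by apply/setP => L; rewrite !inE andbAC. Qed.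

Lemma pencil_sec_external Q : pencil_sec Q 0 = [set L in external | (Q <= L)%MS].
Proof. by apply/setP => L; rewrite !inE andbAC. Qed.

Lemma long_through_K X : X \in K -> long_through X = 3%N.
Proof.
move=> XK; have pX := K_points XK.
have part := pencil_partition pX K_points.
have rest : forall L, L \in pencil X ->
    #|on_line K L :\ X| = ((q - 4) + (sec L == (q - 2)%N))%N.
  move=> L; rewrite inE => /andP [lL XL].
  have : sec L = (#|on_line K L :\ X|).+1 by rewrite (cardsD1 X) !inE XK XL.
  have ne : (q - 3 == q - 2)%N = false by apply/eqP; lia.
  by case: (sec_values lL) => ->; rewrite ?ne ?eqxx; lia.
rewrite (eq_bigr _ rest) big_split /= sum_nat_const sum_indicator card_pencil //
  -/(pencil_sec X (q - 2)) pencil_sec_long in part.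
have := cardsD1 X K; rewrite XK card_K /= => card_KX.
by move: q_ge7 part card_KX; move: #|F| #|K :\ X| (long_through X) => q' a b; nia.
Qed.

(* Counting the incidences between K and the long secants forces q = 8. *)
Lemma q8_long20 : q = 8%N /\ #|long| = 20%N.
Proof.
apply: long_secant_arith => //; rewrite -card_K.
rewrite mulnC -sum_nat_const -(eq_bigr _ long_through_K) double_count -sum_nat_const.
by apply: eq_bigr => L; rewrite inE => /andP [_ /eqP <-]; apply: eq_card => P; rewrite !inE.
Qed.

(* The 9 lines through a point off K (q = 8) carry its 40 points in parts of
   0, 5 or 6: either 0 long secants and 1 external line, or 5 and 2. *)
Lemma off_profile Q : Q \in off ->
  (long_through Q = 0%N /\ ext_through Q = 1%N) \/
  (long_through Q = 5%N /\ ext_through Q = 2%N).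
Proof.
rewrite inE => /andP [pQ nQK]; have [q8 _] := q8_long20.
have part := pencil_partition pQ K_points.
have rest : forall L, L \in pencil Q -> #|on_line K L :\ Q| =
    ((q - 3) * (sec L == q - 3) + (q - 2) * (sec L == q - 2))%N.
  move=> L; rewrite inE => /andP [lL _].
  rewrite card_setD1_notin; last by rewrite inE (negbTE nQK).
  by case: (sec_values lL) => ->; rewrite q8.
have one : forall L, L \in pencil Q ->
    1%N = ((sec L == 0) + (sec L == q - 3) + (sec L == q - 2))%N.
  by move=> L; rewrite inE => /andP [lL _]; case: (sec_values lL) => ->; rewrite q8.
rewrite (eq_bigr _ rest) big_split /= -!big_distrr /= !sum_indicator in part.
rewrite card_setD1_notin // in part.
have := card_pencil pQ; rewrite -sum1_card (eq_bigr _ one) !big_split /= !sum_indicator.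
rewrite -!/(pencil_sec Q _) pencil_sec_long pencil_sec_external in part *.
rewrite card_K q8 in part *.
by move: part; move: (long_through Q) (ext_through Q) #|pencil_sec Q _| => v w a; lia.
Qed.

Lemma card_rich_off : #|[set Q in off | long_through Q == 5%N]| = 12%N.
Proof.
have [q8 long20] := q8_long20.
have off_on_long : forall L, L \in long -> #|[set Q in off | (Q <= L)%MS]| = 3%N.
  move=> L; rewrite inE => /andP [lL /eqP secL].
  have := cardsID K (line_points L); rewrite card_line_points //.
  have -> : line_points L :&: K = on_line K L.
    apply/setP => P; rewrite !inE.
    by case PK: (P \in K); rewrite ?andbT ?andbF //= K_points.
  have -> : line_points L :\: K = [set Q in off | (Q <= L)%MS].
    by apply/setP => P; rewrite !inE; case: (P \in K) (pg_point P) (P <= L)%MS => [] [] [].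
  by rewrite secL q8; move: #|[set Q in off | _]| => c; lia.
have five : forall Q, Q \in off -> long_through Q = (5 * (long_through Q == 5%N))%N.
  by move=> Q /off_profile [[-> _]|[-> _]].
have := double_count long off (fun L Q => (Q <= L)%MS).
rewrite (eq_bigr _ off_on_long) sum_nat_const long20 (eq_bigr _ five) -big_distrr /=.
by rewrite sum_indicator; move: #|[set Q in off | _]| => c; lia.
Qed.

Lemma off_on_external L : L \in external -> #|[set Q in off | (Q <= L)%MS]| = 9%N.
Proof.
rewrite inE => /andP [lL /eqP /cards0_eq secL]; have [q8 _] := q8_long20.
rewrite -q8 -(card_line_points lL); apply: eq_card => P; rewrite !inE.
case PL: (P <= L)%MS; rewrite ?andbT ?andbF //.
case PK: (P \in K) => /=; last by rewrite andbT.
by have := in_set0 P; rewrite -secL inE PK PL.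
Qed.

Lemma off_on_two_external L M : L \in external -> M \in external -> L != M ->
  #|[set Q in off | (Q <= L)%MS && (Q <= M)%MS]| = 1%N.
Proof.
rewrite !inE => /andP [lL /eqP /cards0_eq secL] /andP [lM _] nLM.
have [Q0 meet] := lines_meet_unique lL lM nLM.
rewrite (_ : [set Q in off | _] = [set Q0]) ?cards1 // -meet.
apply/setP => P; rewrite !inE.
case PL: (P <= L)%MS; rewrite ?andbF ?andbT //=.
case PK: (P \in K) => /=; last by rewrite andbT.
by have := in_set0 P; rewrite -secL inE PK PL.
Qed.

(* Counting pairs of external lines through the points off K. *)
Lemma external_pairs :
  (#|external| * (9 + (#|external| - 1)) = \sum_(Q in off) ext_through Q ^ 2)%N.
Proof.
pose g (L M : 'M[F]_3) := #|[set Q in off | (Q <= L)%MS && (Q <= M)%MS]|.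
have diag : forall L, L \in external -> (\sum_(M in external) g L M = 9 + (#|external| - 1))%N.
  move=> L LZ; rewrite (bigD1 L) //=.
  have -> : g L L = 9%N.
    by rewrite -(off_on_external LZ); apply: eq_card => Q; rewrite !inE andbb.
  rewrite (eq_bigr (fun _ => 1%N)); last first.
    by move=> M /andP [MZ nML]; rewrite /g off_on_two_external // eq_sym.
  rewrite sum1_card (cardsD1 L) LZ add1n subSS subn0.
  by congr (_ + _)%N; apply: eq_card => M; rewrite unfold_in !inE andbC.
rewrite -sum_nat_const -(eq_bigr _ diag).
transitivity (\sum_(L in external) \sum_(Q in off) \sum_(M in external)
                ((Q <= L)%MS * (Q <= M)%MS))%N.
  apply: eq_bigr => L _; rewrite exchange_big /=; apply: eq_bigr => M _.
  by rewrite /g -sum_indicator; apply: eq_bigr => Q _; rewrite mulnb.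
rewrite exchange_big /=; apply: eq_bigr => Q _.
under eq_bigr do rewrite -big_distrr /=.
by rewrite -big_distrl /= !sum_indicator mulnn.
Qed.

(* With z external lines: z(9 + z - 1) = 9z + 2 * 12, i.e. z(z-1) = 24,
   which no integer z satisfies. *)
Lemma three_secant_values_absurd : False.
Proof.
have square : forall Q, Q \in off ->
    (ext_through Q ^ 2 = ext_through Q + 2 * (long_through Q == 5%N))%N.
  by move=> Q /off_profile [[-> ->]|[-> ->]].
have := external_pairs.
rewrite (eq_bigr _ square) big_split /= -big_distrr /= sum_indicator card_rich_off.
rewrite double_count (eq_bigr _ off_on_external) sum_nat_const.
by move: #|external| => z; have [|] := leqP z 5; nia.
Qed.

End ThreeSecantValues.

Theorem mainTheorem16 (F : finFieldType) (K : {set 'M[F]_3}) :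
  (7 <= #|F|)%N ->
  (forall P, P \in K -> pg_point P) ->
  #|K| = (#|F| * (#|F| - 3))%N ->
  exists L : 'M[F]_3, pg_line L /\
    #|[set P in K | incident P L]| \notin [:: 0%N; (#|F| - 3)%N; (#|F| - 2)%N].
Proof.
move=> q_ge7 K_points card_K.
have [|/existsPn no_line] :=
  boolP [exists L, pg_line L && (#|on_line K L| \notin [:: 0; #|F| - 3; #|F| - 2])%N].
  by case/existsP => L /andP [lL secL]; exists L.
exfalso; apply: (three_secant_values_absurd q_ge7 K_points card_K) => L lL.
by have := no_line L; rewrite lL negbK !inE => /or3P [] /eqP; constructor.
Qed.
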